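(* Let $\mathcal{X}=\mathcal{X}_1\times\cdots\times\mathcal{X}_d$ and let $M:\mathcal{X}^n\to\mathcal{Y}$ be a randomized algorithm. (1) If $M$ satisfies $\varepsilon_0$-$\nabla_0$DP, then $M$ satisfies $(d\varepsilon_0)$-DP. (2) If $M$ satisfies $\varepsilon_0$-$\nabla_0$CDP, then $M$ satisfies $\frac12 d^2\varepsilon_0^2$-zCDP, which in turn implies that $M$ satisfies $(\tilde\varepsilon,\tilde\delta)$-DP for every $\tilde\varepsilon\ge\frac12 d^2\varepsilon_0^2$ with $\tilde\delta=\exp\!\left(-(\tilde\varepsilon-\frac12 d^2\varepsilon_0^2)^2/(2d^2\varepsilon_0^2)\right)$. (3) More generally, if $M$ satisfies $\varepsilon$-$\nabla$DP for a symmetric non-negative $\varepsilon:\mathcal{X}\times\mathcal{X}\to\mathbb{R}$, then $M$ satisfies $(\sup_{x,x'\in\mathcal{X}}\varepsilon(x,x'))$-DP. (4) Conversely, if $M$ satisfies $\varepsilon$-DP for a constant $\varepsilon\ge0$, then $M$ satisfies $\varepsilon$-$\nabla$DP (with $\varepsilon$ viewed as a constant function) and $\varepsilon$-$\nabla_0$DP.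
   Context: Two datasets $x,x'\in\mathcal{X}^n$ differ on a single entry if there is $i$ with $x_j=x'_j$ for all $j\ne i$. $M$ is $(\varepsilon,\delta)$-DP if for all such $x,x'$ and measurable $S$, $\Pr[M(x)\in S]\le e^{\varepsilon}\Pr[M(x')\in S]+\delta$; $\varepsilon$-DP means $\delta=0$. Rényi divergence: $D_\lambda(P\|Q)=\frac{1}{\lambda-1}\log\mathbb{E}_{X\sim P}[(P(X)/Q(X))^{\lambda-1}]$, $D_*(P\|Q)=\sup_{\lambda>1}\frac1\lambda D_\lambda(P\|Q)$. $M$ is $\frac12\varepsilon^2$-zCDP if $D_*(M(x)\|M(x'))\le\frac12\varepsilon^2$ for all such $x,x'$. For symmetric non-negative $\varepsilon:\mathcal{X}\times\mathcal{X}\to\mathbb{R}$, $M$ is $\varepsilon$-$\nabla$DP if for all $x,x'$ differing only in entry $i$, $\Pr[M(x)\in S]\le e^{\varepsilon(x_i,x'_i)}\Pr[M(x')\in S]$ for all $S$; $\varepsilon$-$\nabla$CDP if $D_*(M(x)\|M(x'))\le\frac12\varepsilon(x_i,x'_i)^2$. With $\|u-v\|_0=|\{j\in[d]:u_j\ne v_j\}|$ for $u,v\in\mathcal{X}$, $\varepsilon_0$-$\nabla_0$DP (resp. $\varepsilon_0$-$\nabla_0$CDP) means $\varepsilon$-$\nabla$DP (resp. $\varepsilon$-$\nabla$CDP) with $\varepsilon(u,v)=\varepsilon_0\|u-v\|_0$. *)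

From mathcomp Require Import all_boot all_order all_algebra.
From mathcomp Require Import all_classical all_reals all_analysis.
Set Implicit Arguments.
Unset Strict Implicit.
Unset Printing Implicit Defensive.
Import Order.TTheory GRing.Theory Num.Theory.
Local Open Scope classical_set_scope.
Local Open Scope ring_scope.

Section DPdefs.
Context {R : realType} {dY : measure_display} {Y : measurableType dY}.

Local Open Scope ereal_scope.
Local Open Scope charge_scope.

Definition renyi_div (P Q : probability Y R) (lam : R) : \bar R :=
  if `[< P `<< Q >] then
    let I := \int[P]_y (('d (charge_of_finite_measure P) '/d Q) y `^ (lam - 1)%R) in
    if I == +oo then +oo else ((lam - 1)^-1 * ln (fine I))%:E
  else +oo.

Definition renyi_star (P Q : probability Y R) : \bar R :=
  ereal_sup [set (lam^-1)%:E * renyi_div P Q lam | lam in [set lam : R | (1 < lam)%R]].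

(* datasets of size n over the data domain T are functions 'I_n -> T *)
Definition differ_single {T : Type} {n : nat} (x x' : 'I_n -> T) : Prop :=
  exists i : 'I_n, forall j : 'I_n, j != i -> x j = x' j.

Definition DP {T : Type} {n : nat} (M : ('I_n -> T) -> probability Y R)
    (eps delta : R) : Prop :=
  forall x x' : 'I_n -> T, differ_single x x' ->
  forall S : set Y, measurable S ->
    M x S <= (expR eps)%:E * M x' S + delta%:E.

(* rho-zCDP (rho = eps^2/2 in the paper's notation) *)
Definition zCDP {T : Type} {n : nat} (M : ('I_n -> T) -> probability Y R)
    (rho : R) : Prop :=
  forall x x' : 'I_n -> T, differ_single x x' ->
    renyi_star (M x) (M x') <= rho%:E.

Definition gradDP {T : Type} {n : nat} (epsf : T -> T -> R)
    (M : ('I_n -> T) -> probability Y R) : Prop :=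
  forall (x x' : 'I_n -> T) (i : 'I_n), (forall j : 'I_n, j != i -> x j = x' j) ->
  forall S : set Y, measurable S ->
    M x S <= (expR (epsf (x i) (x' i)))%:E * M x' S.

Definition gradCDP {T : Type} {n : nat} (epsf : T -> T -> R)
    (M : ('I_n -> T) -> probability Y R) : Prop :=
  forall (x x' : 'I_n -> T) (i : 'I_n), (forall j : 'I_n, j != i -> x j = x' j) ->
    renyi_star (M x) (M x') <= ((epsf (x i) (x' i)) ^+ 2 / 2)%:E.

End DPdefs.

Definition l0dist {d : nat} {Xs : 'I_d -> Type} (u v : forall j : 'I_d, Xs j) : nat :=
  #|[set j : 'I_d | `[< u j <> v j >] ]|.

Definition grad0DP {R : realType} {dY : measure_display} {Y : measurableType dY}
    {d n : nat} {Xs : 'I_d -> Type} (eps0 : R)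
    (M : ('I_n -> forall j : 'I_d, Xs j) -> probability Y R) : Prop :=
  gradDP (fun u v => eps0 * (l0dist u v)%:R) M.

Definition grad0CDP {R : realType} {dY : measure_display} {Y : measurableType dY}
    {d n : nat} {Xs : 'I_d -> Type} (eps0 : R)
    (M : ('I_n -> forall j : 'I_d, Xs j) -> probability Y R) : Prop :=
  gradCDP (fun u v => eps0 * (l0dist u v)%:R) M.

From mathcomp Require Import all_boot all_order all_algebra.
From mathcomp Require Import all_classical all_reals all_analysis.
From mathcomp Require Import measurable_realfun lra ring.
Import Order.TTheory GRing.Theory Num.Theory.
Local Open Scope classical_set_scope.
Local Open Scope ring_scope.

(* Parts (1), (3) and (4) only compare privacy parameters: a per-record bound
   [exp (eps (x_i, x'_i))] is at most [exp (d eps0)], resp. [exp (sup eps)], and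
   conversely [eps <= eps0 * ||u - v||_0] as soon as [u <> v].  Part (2) reduces
   likewise to [rho]-zCDP with [rho = (d eps0)^2 / 2], and zCDP gives
   (eps, delta)-DP by a Chernoff bound on the density [f = dP/dQ]: on
   [{f <= e^eps}] we have [P <= e^eps Q], while Markov's inequality for
   [f ^ (lam - 1)] together with the Renyi bound
   [int f ^ (lam - 1) dP <= exp ((lam - 1) lam rho)] gives
   [P {f > e^eps} <= exp ((lam - 1) (lam rho - eps))], which is
   [exp (- (eps - rho)^2 / (4 rho))] at the optimal [lam = (eps + rho) / (2 rho)]. *)

Section renyi_star_DP.
Local Open Scope ereal_scope.
Local Open Scope charge_scope.
Context {R : realType} {dY : measure_display} {Y : measurableType dY}.
Variables P Q : probability Y R.

Let f := 'd (charge_of_finite_measure P) '/d Q.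

Lemma renyi_div_moment_le (lam rho : R) : (1 < lam)%R ->
  (lam^-1)%:E * renyi_div P Q lam <= rho%:E ->
  P `<< Q /\ \int[P]_y (f y `^ (lam - 1)) <= (expR ((lam - 1) * lam * rho))%:E.
Proof.
move=> lam1; have lam0 : (0 < lam)%R by exact: lt_trans lam1.
have noo : ~ ((lam^-1)%:E * +oo <= rho%:E).
  by rewrite gt0_muley ?lte_fin ?invr_gt0 // leye_eq.
rewrite /renyi_div; case: asboolP => [PQ|_] //.
set I := \int[P]_y _; case: eqP => [//|Inoo].
rewrite -EFinM lee_fin mulrA -invfM ler_pdivrMl ?mulr_gt0 ?subr_gt0 // => lnI.
split => //.
have I0 : 0 <= I by apply: integral_ge0 => y _; exact: poweR_ge0.
rewrite -(fineK (_ : I \is a fin_num)); last by rewrite ge0_fin_numE // ltey; exact/eqP.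
rewrite lee_fin; have := fine_ge0 I0; rewrite le0r => /orP[/eqP ->|Ipos].
  exact: expR_ge0.
by rewrite -(lnK Ipos) ler_expR (mulrC (lam - 1)%R).
Qed.

Section absolutely_continuous.
Hypothesis PQ : P `<< Q.

Let PQc : charge_of_finite_measure P `<< Q := PQ.

Let measurable_f : measurable_fun [set: Y] f.
Proof. exact: measurable_int (Radon_Nikodym_integrable PQc). Qed.

Lemma measurable_density_gt (c : R) : measurable [set y | c%:E < f y].
Proof. by rewrite -(setTI [set _ | _]); exact: measurable_lte. Qed.

Lemma measure_le_density_gt (c : R) (S : set Y) : measurable S ->
  P S <= (expR c)%:E * Q S + P [set y | (expR c)%:E < f y].
Proof.
move=> mS; set A := [set y | _ < _]; have mA : measurable A := measurable_density_gt _.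
rewrite (measureDI P mS mA); apply: leeD; last first.
  by apply: le_measure; rewrite ?inE //; exact: measurableI.
have mSA : measurable (S `\` A) := measurableD mS mA.
apply: (@le_trans _ _ (\int[Q]_(y in S `\` A) f y)).
  by rewrite -(Radon_Nikodym_integral PQc mSA).
apply: (@le_trans _ _ (\int[Q]_(y in S `\` A) (expR c)%:E)).
  apply: le_integral => //.
  - exact: integrableS (Radon_Nikodym_integrable PQc).
  - exact: finite_measure_integrable_cst.
  - by move=> y; rewrite inE => -[_ /negP]; rewrite -leNgt.
rewrite integral_cst //; apply: lee_wpmul2l; first by rewrite lee_fin expR_ge0.
by apply: le_measure; rewrite ?inE //; exact: subDsetl.
Qed.

Lemma measure_density_gt_le (lam c : R) : (1 < lam)%R ->
  P [set y | (expR c)%:E < f y] * (expR ((lam - 1) * c))%:E <=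
  \int[P]_y (f y `^ (lam - 1)).
Proof.
move=> lam1; set A := [set y | _ < _]; have mA : measurable A := measurable_density_gt _.
have mfpow : measurable_fun [set: Y] (fun y => f y `^ (lam - 1)).
  exact: measurableT_comp (measurable_poweR _) measurable_f.
rewrite muleC -(integral_cst P mA).
apply: (@le_trans _ _ (\int[P]_(y in A) f y `^ (lam - 1))); last first.
  by apply: ge0_subset_integral => // y _; exact: poweR_ge0.
apply: ge0_le_integral => //.
- by move=> y _; rewrite lee_fin expR_ge0.
- exact: measurable_funS mfpow.
move=> y Ay; have fy_fin : f y \is a fin_num := Radon_Nikodym_fin_num y PQc.
move: Ay fy_fin; rewrite /A /=; case: (f y) => // r; rewrite lte_fin => cr _.
have r0 : (0 < r)%R := lt_trans (expR_gt0 c) cr.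
rewrite poweR_EFin lee_fin /powR gt_eqF // ler_expR ler_pM2l ?subr_gt0 //.
by rewrite -[leLHS]expRK ler_ln ?posrE ?expR_gt0 // ltW.
Qed.

End absolutely_continuous.

Lemma renyi_star_DP (rho eps : R) (S : set Y) :
  (0 < rho)%R -> (rho < eps)%R -> renyi_star P Q <= rho%:E -> measurable S ->
  P S <= (expR eps)%:E * Q S + (expR (- ((eps - rho) ^+ 2 / (4 * rho))))%:E.
Proof.
move=> rho0 rho_eps PQrho mS.
pose lam := ((eps + rho) / (2 * rho))%R.
have lam1 : (1 < lam)%R by rewrite /lam ltr_pdivlMr ?mulr_gt0 //; lra.
have [PQ moment] := renyi_div_moment_le lam rho lam1
  (le_trans (ereal_sup_ubound (ex_intro2 _ _ lam lam1 erefl)) PQrho).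
apply: (le_trans (measure_le_density_gt PQ eps S mS)); rewrite leeD2l //.
set A := [set y | _ < f y].
have PAE : P A = (fine (P A))%:E.
  by rewrite fineK // fin_num_measure //; exact: measurable_density_gt.
have := le_trans (measure_density_gt_le PQ lam eps lam1) moment.
rewrite -/A PAE -EFinM !lee_fin.
rewrite -ler_pdivlMr ?expR_gt0 // -expRB => tail.
apply: (le_trans tail); rewrite ler_expR /lam le_eqVlt; apply/orP; left.
by apply/eqP; field; rewrite gt_eqF.
Qed.

End renyi_star_DP.

Section DP_conversions.
Local Open Scope ereal_scope.
Context {R : realType} {dY : measure_display} {Y : measurableType dY}.
Context {T : Type} {n : nat}.
Variable M : ('I_n -> T) -> probability Y R.

Lemma DP_delta_ge1 (eps delta : R) : (1 <= delta)%R -> DP M eps delta.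
Proof.
move=> delta1 x x' _ S mS; apply: le_trans (probability_le1 _ mS) _.
by rewrite -[1]add0e leeD ?lee_fin // mule_ge0 // lee_fin expR_ge0.
Qed.

(* For [rho = 0] or [eps = rho] the formula gives [delta = expR 0 = 1]
   (using [x / 0 = 0] in the first case). *)
Lemma DP_of_zCDP (rho eps : R) : (0 <= rho)%R -> (rho <= eps)%R -> zCDP M rho ->
  DP M eps (expR (- ((eps - rho) ^+ 2 / (4 * rho)))).
Proof.
move=> rho0 rho_eps Mrho.
have [->|rho_neq0] := eqVneq rho 0%R.
  by rewrite mulr0 invr0 mulr0 oppr0 expR0; exact: DP_delta_ge1.
have [<-|eps_neq] := eqVneq rho eps.
  by rewrite subrr expr0n /= mul0r oppr0 expR0; exact: DP_delta_ge1.
move=> x x' xx' S mS; apply: renyi_star_DP => //; last exact: Mrho.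
  by rewrite lt_neqAle eq_sym rho_neq0.
by rewrite lt_neqAle eps_neq.
Qed.

Lemma DP_of_gradDP (epsf : T -> T -> R) (eps : R) :
  (forall u v, epsf u v <= eps)%R -> gradDP epsf M -> DP M eps 0.
Proof.
move=> epsf_le Mgrad x x' [i xx'] S mS; rewrite adde0.
apply: le_trans (Mgrad x x' i xx' S mS) _.
by apply: lee_wpmul2r => //; rewrite lee_fin ler_expR.
Qed.

Lemma zCDP_of_gradCDP (epsf : T -> T -> R) (rho : R) :
  (forall u v, epsf u v ^+ 2 / 2 <= rho)%R -> gradCDP epsf M -> zCDP M rho.
Proof.
move=> epsf_le Mgrad x x' [i xx']; apply: le_trans (Mgrad x x' i xx') _.
by rewrite lee_fin.
Qed.

Lemma gradDP_of_DP (eps : R) (epsf : T -> T -> R) :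
  (forall u, 0 <= epsf u u)%R -> (forall u v, u <> v -> eps <= epsf u v)%R ->
  DP M eps 0 -> gradDP epsf M.
Proof.
move=> epsf_ge0 epsf_ge Mdp x x' i xx' S mS.
have [xi_eq|xi_neq] := pselect (x i = x' i).
  have -> : x = x'.
    by apply: funext => j; have [->|/xx'] := eqVneq j i.
  rewrite -[leLHS]mul1e lee_wpmul2r //.
  by rewrite lee_fin -expR0 ler_expR.
apply: le_trans (Mdp x x' (ex_intro _ i xx') S mS) _; rewrite adde0.
by apply: lee_wpmul2r => //; rewrite lee_fin ler_expR epsf_ge.
Qed.

End DP_conversions.

Section l0dist.
Context {d : nat} {Xs : 'I_d -> Type}.
Implicit Types u v : forall j : 'I_d, Xs j.

Lemma l0dist_le_dim u v : (l0dist u v <= d)%N.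
Proof. by rewrite /l0dist (leq_trans (max_card _)) // card_ord. Qed.

Lemma l0distxx u : l0dist u u = 0%N.
Proof.
rewrite /l0dist; apply: eq_card0 => j.
by rewrite [RHS]inE; apply/negbTE/negP; rewrite in_setE /= => /asboolP.
Qed.

Lemma l0dist_gt0 u v : u <> v -> (0 < l0dist u v)%N.
Proof.
move=> uv; have /existsNP[j uvj] : ~ (forall j, u j = v j).
  by move=> uv_eq; apply: uv; exact: functional_extensionality_dep.
by apply/card_gt0P; exists j; rewrite in_setE /=; exact/asboolP.
Qed.

End l0dist.

Theorem proposition2p8 (R : realType) (dY : measure_display) (Y : measurableType dY)
    (d n : nat) (Xs : 'I_d -> Type)
    (M : ('I_n -> forall j : 'I_d, Xs j) -> probability Y R) :
  [/\
  (* (1) *)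
  (forall eps0 : R, 0 <= eps0 -> grad0DP eps0 M -> DP M (d%:R * eps0) 0),
  (* (2) *)
  (forall eps0 : R, 0 <= eps0 -> grad0CDP eps0 M ->
     zCDP M ((d%:R * eps0) ^+ 2 / 2) /\
     (forall epst : R, (d%:R * eps0) ^+ 2 / 2 <= epst ->
        DP M epst (expR (- ((epst - (d%:R * eps0) ^+ 2 / 2) ^+ 2
                             / (2 * (d%:R * eps0) ^+ 2)))))),
  (* (3) *)
  (forall epsf : (forall j : 'I_d, Xs j) -> (forall j : 'I_d, Xs j) -> R,
     (forall u v, epsf u v = epsf v u) -> (forall u v, 0 <= epsf u v) ->
     has_ubound (range (fun uv => epsf uv.1 uv.2)) ->
     gradDP epsf M -> DP M (sup (range (fun uv => epsf uv.1 uv.2))) 0) &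
  (* (4) *)
  (forall eps : R, 0 <= eps -> DP M eps 0 ->
     gradDP (fun _ _ => eps) M /\ grad0DP eps M)].
Proof.
have l0_bound (eps0 : R) (u v : forall j : 'I_d, Xs j) :
    0 <= eps0 -> eps0 * (l0dist u v)%:R <= d%:R * eps0.
  by move=> eps0_ge0; rewrite mulrC ler_wpM2r // ler_nat l0dist_le_dim.
split.
- by move=> eps0 eps0_ge0; apply: DP_of_gradDP => u v; exact: l0_bound.
- move=> eps0 eps0_ge0 Mgrad.
  have Mz : zCDP M ((d%:R * eps0) ^+ 2 / 2).
    apply: zCDP_of_gradCDP Mgrad => u v.
    by rewrite ler_pM2r // lerXn2r ?nnegrE ?mulr_ge0 ?l0_bound.
  split=> // epst rho_le.
  rewrite (_ : 2 * _ = 4 * ((d%:R * eps0) ^+ 2 / 2)); last by field.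
  by apply: DP_of_zCDP => //; rewrite divr_ge0 ?sqr_ge0.
- move=> epsf _ _ epsf_ub; apply: DP_of_gradDP => u v.
  by apply: sup_upper_bound; [split=> //; exists (epsf u v)|]; exists (u, v).
- move=> eps eps_ge0 Mdp; split; apply: gradDP_of_DP Mdp => //.
  + by move=> u; rewrite l0distxx mulr0.
  + by move=> u v uv; rewrite ler_peMr // ler1n l0dist_gt0.
Qed.
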